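(* Let $m,n\ge0$ with $m+n\ge 3$, and assume $\operatorname{char}K\ne2$ if $m+n=4$ and $\operatorname{char}K\ne3$ if $m+n=3$. Then the kernel of the universal central extension $\psi:\mathfrak{stl}(m,n,\mathcal A)\to\mathfrak{sl}(m,n,\mathcal A)$ in the category of Leibniz superalgebras is isomorphic (as a $K$-vector space) to $HH_1(\mathcal A)=\operatorname{Ker}d_1/\operatorname{Im}d_2$, where $d_1:\mathcal A\otimes\mathcal A\to\mathcal A$, $d_1(a_0\otimes a_1)=a_0a_1-a_1a_0$, and $d_2:\mathcal A^{\otimes3}\to\mathcal A\otimes\mathcal A$, $d_2(a_0\otimes a_1\otimes a_2)=a_0a_1\otimes a_2-a_0\otimes a_1a_2-a_1\otimes a_2a_0$.
   Context: Standing assumptions: $K$ is a field (the paper assumes throughout $\operatorname{char}K\ne 2,3$), and $\mathcal A$ is an associative unital $K$-algebra; tensor products over $K$. A Leibniz superalgebra is a $\mathbb Z_2$-graded $K$-space with a bilinear bracket respecting the grading and satisfying $[[a,b],c]=[a,[b,c]]-(-1)^{|a||b|}[b,[a,c]]$ for homogeneous elements. For $1\le i,j\le m+n$ put $\tau_{ij}=0$ if $i,j\le m$ or $i,j\ge m+1$, and $\tau_{ij}=1$ otherwise. $\mathfrak{gl}(m,n,\mathcal A)$: $(m+n)\times(m+n)$ matrices over $\mathcal A$, matrix unit $E_{ij}(a)$ of degree $\tau_{ij}$, bracket $[X,Y]=XY-(-1)^{\alpha\beta}YX$. $\mathfrak{sl}(m,n,\mathcal A)$ is the subsuperalgebra generated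 by the $E_{ij}(a)$, $i\ne j$. $\mathfrak{stl}(m,n,\mathcal A)$ is the Leibniz superalgebra generated by $v_{ij}(a)$, $1\le i\ne j\le m+n$, $a\in\mathcal A$, of degree $\tau_{ij}$, subject to: (1) $K$-linearity in $a$; (2) $[v_{ij}(a),v_{kl}(b)]=0$ if $i\ne l$, $j\ne k$; (3) $[v_{ij}(a),v_{kl}(b)]=v_{il}(ab)$ if $i\ne l$, $j=k$; (4) $[v_{ij}(a),v_{kl}(b)]=-(-1)^{\tau_{ij}\tau_{kl}}v_{kj}(ba)$ if $i=l$, $j\ne k$. $\psi$ is the homomorphism with $\psi(v_{ij}(a))=E_{ij}(a)$. *)

From HB Require Import structures.
From mathcomp Require Import all_boot all_order all_algebra.
Set Implicit Arguments. Unset Strict Implicit. Unset Printing Implicit Defensive.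
Import GRing.Theory.
Local Open Scope ring_scope.

Section Defs.
Variable K : fieldType.

(* A Z2-grading of V is encoded by the projection p0 onto the even part
   along the odd part: V_0 = {x | p0 x = x}, V_1 = {x | p0 x = 0}. *)
Definition homog (V : lmodType K) (p0 : V -> V) (b : bool) (x : V) : Prop :=
  if b then p0 x = 0 else p0 x = x.

Definition klinear (V W : lmodType K) (f : V -> W) : Prop :=
  forall (k : K) (x y : V), f (k *: x + y) = k *: f x + f y.

Definition is_grading (V : lmodType K) (p0 : V -> V) : Prop :=
  klinear p0 /\ (forall x, p0 (p0 x) = p0 x).

Definition is_bilinear (V W U : lmodType K) (h : V -> W -> U) : Prop :=
  (forall y, klinear (fun x => h x y)) /\ (forall x, klinear (h x)).

Definition is_trilinear (V W X U : lmodType K) (h : V -> W -> X -> U) : Prop :=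
  (forall y z, klinear (fun x => h x y z)) /\
  (forall x z, klinear (fun y => h x y z)) /\
  (forall x y, klinear (h x y)).

Definition is_leib_super (V : lmodType K) (p0 : V -> V) (br : V -> V -> V) : Prop :=
  [/\ is_grading p0,
      is_bilinear br,
      (forall (a b : bool) x y, homog p0 a x -> homog p0 b y ->
          homog p0 (a (+) b) (br x y))
    & (forall (a b c : bool) x y z,
          homog p0 a x -> homog p0 b y -> homog p0 c z ->
          br (br x y) z = br x (br y z) - ((-1) ^+ (a && b)) *: br y (br x z))].

Definition is_ls_hom (V W : lmodType K) (p0 : V -> V) (br : V -> V -> V)
    (q0 : W -> W) (br' : W -> W -> W) (f : V -> W) : Prop :=
  [/\ klinear f,
      (forall x y, f (br x y) = br' (f x) (f y))
    & (forall x, f (p0 x) = q0 (f x))].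

Variable A : algType K.

(* indices 1..m+n are represented by 'I_(m+n) (0-based); index i is in the
   first block iff i < m *)
Definition tau (m n : nat) (i j : 'I_(m + n)) : bool := (i < m)%N != (j < m)%N.

Definition stl_rel (m n : nat) (V : lmodType K) (p0 : V -> V) (br : V -> V -> V)
    (w : 'I_(m + n) -> 'I_(m + n) -> A -> V) : Prop :=
  [/\ (forall i j, i != j -> forall (k : K) (a b : A),
          w i j (k *: a + b) = k *: w i j a + w i j b),
      (forall i j, i != j -> forall a, homog p0 (tau i j) (w i j a)),
      (forall i j k l, i != j -> k != l -> i != l -> j != k -> forall a b,
          br (w i j a) (w k l b) = 0),
      (forall i j l, i != j -> j != l -> i != l -> forall a b,
          br (w i j a) (w j l b) = w i l (a * b))
    & (forall i j k, i != j -> k != i -> j != k -> forall a b,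
          br (w i j a) (w k i b) = - (((-1) ^+ (tau i j && tau k i)) *: w k j (b * a)))].

(* (L, p0, br, v) is the Leibniz superalgebra presented by generators v_ij(a)
   and relations (1)-(4), i.e. it satisfies the universal property of the
   presentation. *)
Definition is_stl (m n : nat) (L : lmodType K) (p0 : L -> L) (br : L -> L -> L)
    (v : 'I_(m + n) -> 'I_(m + n) -> A -> L) : Prop :=
  [/\ is_leib_super p0 br,
      stl_rel p0 br v
    & forall (M : lmodType K) (q0 : M -> M) (br' : M -> M -> M)
             (w : 'I_(m + n) -> 'I_(m + n) -> A -> M),
        is_leib_super q0 br' -> stl_rel q0 br' w ->
        exists f : L -> M,
          [/\ is_ls_hom p0 br q0 br' f,
              (forall i j a, i != j -> f (v i j a) = w i j a)
            & (forall g : L -> M, is_ls_hom p0 br q0 br' g ->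
                 (forall i j a, i != j -> g (v i j a) = w i j a) ->
                 forall x, g x = f x)]].

Definition mx_part (m n : nat) (b : bool) (X : 'M[A]_(m + n)) : 'M[A]_(m + n) :=
  \matrix_(i, j) (if tau i j == b then X i j else 0).

(* [X,Y] = XY - (-1)^{|X||Y|} YX on homogeneous parts, extended bilinearly *)
Definition superbr (m n : nat) (X Y : 'M[A]_(m + n)) : 'M[A]_(m + n) :=
  \sum_(a : bool) \sum_(b : bool)
     (mx_part a X *m mx_part b Y
        - ((-1) ^+ (a && b)) *: (mx_part b Y *m mx_part a X)).

Definition Eunit (m n : nat) (i j : 'I_(m + n)) (a : A) : 'M[A]_(m + n) :=
  \matrix_(p, q) (if (p == i) && (q == j) then a else 0).

Definition is_tensor2 (T : lmodType K) (t : A -> A -> T) : Prop :=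
  is_bilinear t /\
  forall (W : lmodType K) (h : A -> A -> W), is_bilinear h ->
    exists g : T -> W, [/\ klinear g, (forall a b, g (t a b) = h a b)
      & (forall g' : T -> W, klinear g' -> (forall a b, g' (t a b) = h a b) ->
           forall x, g' x = g x)].

Definition is_tensor3 (T : lmodType K) (t : A -> A -> A -> T) : Prop :=
  is_trilinear t /\
  forall (W : lmodType K) (h : A -> A -> A -> W), is_trilinear h ->
    exists g : T -> W, [/\ klinear g, (forall a b c, g (t a b c) = h a b c)
      & (forall g' : T -> W, klinear g' -> (forall a b c, g' (t a b c) = h a b c) ->
           forall x, g' x = g x)].

(* Ker d1 / Im d2 is isomorphic (as a K-space) to the subspace {z | P z} of V:
   there is a K-linear map from Ker d1 onto {z | P z} whose kernel is Im d2. *)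
Definition quot_iso (T2 T3 V : lmodType K) (d1 : T2 -> A) (d2 : T3 -> T2)
    (P : V -> Prop) : Prop :=
  exists g : T2 -> V,
    [/\ (forall (k : K) x y, d1 x = 0 -> d1 y = 0 -> g (k *: x + y) = k *: g x + g y),
        (forall x, d1 x = 0 -> P (g x)),
        (forall z, P z -> exists x, d1 x = 0 /\ g x = z)
      & (forall x, d1 x = 0 -> (g x = 0 <-> exists y, x = d2 y))].

End Defs.

(* Fix indices o <> e and write h_ij(a,b) = [v_ij(a), v_ji(b)]. The bilinear
   map (a,b) |-> h_oe(a,b) - h_oe(1,ab) induces g : A (x) A -> stl(m,n,A) with
   psi (g x) = +- E_ee(d1 x), so g maps Ker d1 into Ker psi.
   By the Leibniz identity, stl is spanned by the v_ij(a) and their brackets,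
   and the defining relations bring every element to the normal form
   z1 + g x + sum_j h_oj(1, c_j) with z1 a combination of v_ij's. Reading off
   the entries of psi shows that such an element is in Ker psi only when
   z1 = 0, all c_j = 0 and d1 x = 0, so g maps Ker d1 onto Ker psi.
   The Leibniz identity also gives g o d2 = 0. Conversely, X, Y |-> str(X (x) Y)
   is a 2-cocycle on gl(m,n,A) modulo Im d2; the universal property of stl
   lifts psi to the central extension of gl(m,n,A) by (A (x) A)/Im d2, and the
   lift sends g x to (0, +- [x]), so g x = 0 forces x into Im d2. *)

From HB Require Import structures.
From mathcomp Require Import all_boot all_order all_algebra.
From mathcomp Require Import boolp.
Set Implicit Arguments. Unset Strict Implicit. Unset Printing Implicit Defensive.
Import GRing.Theory.
Local Open Scope ring_scope.
Local Open Scope quotient_scope.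

Section KLinear.
Variables (K : fieldType) (V W : lmodType K) (f : V -> W).
Hypothesis lin_f : klinear f.

Lemma klinear0 : f 0 = 0.
Proof.
have := lin_f 1 0 0; rewrite !scale1r addr0 => f0D.
by apply: (addrI (f 0)); rewrite addr0 -f0D.
Qed.

Lemma klinearD : {morph f : x y / x + y}.
Proof. by move=> x y; have := lin_f 1 x y; rewrite !scale1r. Qed.

Lemma klinearZ k : {morph f : x / k *: x}.
Proof. by move=> x; have := lin_f k x 0; rewrite !addr0 klinear0 addr0. Qed.

Lemma klinearN : {morph f : x / - x}.
Proof. by move=> x; rewrite -scaleN1r klinearZ scaleN1r. Qed.

Lemma klinearB : {morph f : x y / x - y}.
Proof. by move=> x y; rewrite klinearD klinearN. Qed.

Lemma klinear_sum (I : Type) (r : seq I) (P : pred I) (F : I -> V) :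
  f (\sum_(i <- r | P i) F i) = \sum_(i <- r | P i) f (F i).
Proof. exact: (big_morph f klinearD klinear0). Qed.
End KLinear.

Inductive span (K : fieldType) (V : lmodType K) (P : V -> Prop) : V -> Prop :=
| span_gen x : P x -> span P x
| span0 : span P 0
| span_lin (k : K) x y : span P x -> span P y -> span P (k *: x + y).

Section Span.
Variables (K : fieldType) (V : lmodType K).
Implicit Types (P Q : V -> Prop) (x y : V).

Lemma spanD P x y : span P x -> span P y -> span P (x + y).
Proof. by move=> Px Py; have := span_lin 1 Px Py; rewrite scale1r. Qed.

Lemma spanZ P k x : span P x -> span P (k *: x).
Proof. by move=> Px; have := span_lin k Px (span0 P); rewrite addr0. Qed.

Lemma spanN P x : span P x -> span P (- x).
Proof. by move=> /(spanZ (-1)); rewrite scaleN1r. Qed.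

Lemma spanB P x y : span P x -> span P y -> span P (x - y).
Proof. by move=> Px /spanN; apply: spanD. Qed.

Lemma span_sub P Q : (forall x, P x -> Q x) -> forall x, span P x -> span Q x.
Proof.
move=> PQ x; elim=> [y /PQ|| k y z _ Py _ Pz]; [exact: span_gen|exact: span0|exact: span_lin].
Qed.

Lemma span_image (W : lmodType K) P (Q : W -> Prop) (f : V -> W) : klinear f ->
  (forall x, P x -> span Q (f x)) -> forall x, span P x -> span Q (f x).
Proof.
move=> lin_f PQ x; elim=> [y /PQ //| | k y z _ Py _ Pz].
  by rewrite (klinear0 lin_f); apply: span0.
by rewrite lin_f; apply: span_lin.
Qed.

Definition in_range (U : Type) (d : U -> V) x := exists u, x = d u.

Lemma span_in_range (U : lmodType K) (d : U -> V) x :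
  klinear d -> span (in_range d) x -> in_range d x.
Proof.
move=> lin_d; elim=> // [|k _ _ _ [u ->] _ [w ->]]; last by exists (k *: u + w); rewrite lin_d.
by exists 0; rewrite (klinear0 lin_d).
Qed.

Definition spanb P : {pred V} := fun x => `[< span P x >].

Lemma spanbP P x : reflect (span P x) (x \in spanb P).
Proof. exact: asboolP. Qed.

Lemma spanb_submod_closed P : submod_closed (spanb P).
Proof.
split=> [|k x y /spanbP Px /spanbP Py]; apply/spanbP; first exact: span0.
exact: span_lin.
Qed.

HB.instance Definition _ P := GRing.isSubmodClosed.Build K V (spanb P)
  (spanb_submod_closed P).
End Span.

(* The library's [{ideal_quot I}] is the quotient Z-module by any
   [zmodClosed] predicate [I]; here it receives the induced scalar action. *)
Section QuotientModule.
Variables (K : fieldType) (V : lmodType K) (P : V -> Prop).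
Local Notation Q := {ideal_quot (spanb P)}.

Definition quot_scale (k : K) : Q -> Q := lift_op1 Q ( *:%R k).

Lemma pi_scale k : {morph \pi_Q : x / k *: x >-> quot_scale k x}.
Proof.
move=> x; unlock quot_scale; apply/eqP; rewrite piE Quotient.equivE.
by rewrite -scalerBr rpredZ // Quotient.idealrBE reprK.
Qed.
Canonical pi_scale_morph k := PiMorph1 (pi_scale k).

Lemma quot_scaleA a b (x : Q) : quot_scale a (quot_scale b x) = quot_scale (a * b) x.
Proof. by elim/quotW: x => x; rewrite !piE scalerA. Qed.

Lemma quot_scale1 : left_id 1 quot_scale.
Proof. by elim/quotW => x; rewrite !piE scale1r. Qed.

Lemma quot_scaleDr : right_distributive quot_scale +%R.
Proof. by move=> k; elim/quotW => x; elim/quotW => y; rewrite !piE scalerDr. Qed.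

Lemma quot_scaleDl (x : Q) : {morph quot_scale^~ x : a b / a + b}.
Proof. by elim/quotW: x => x a b; rewrite !piE scalerDl. Qed.

HB.instance Definition _ := GRing.Zmodule_isLmodule.Build K Q
  quot_scaleA quot_scale1 quot_scaleDr quot_scaleDl.

Lemma pi_klinear : klinear \pi_Q.
Proof. by move=> k x y; rewrite !piE. Qed.

Lemma pi_eq0 x : (\pi_Q x = 0) <-> span P x.
Proof.
have eq_pi : (x \in spanb P) = (\pi_Q x == 0).
  by rewrite -[in LHS](subr0 x) Quotient.idealrBE pi_zeror.
by rewrite (rwP eqP) -eq_pi; split=> /spanbP.
Qed.
End QuotientModule.

(* [abel] proves an equation between sums and opposites of atoms of a
   Z-module by comparing the integer coefficient of each atom. *)
Inductive zexpr := ZVar of nat | ZZero | ZAdd of zexpr & zexpr | ZOpp of zexpr.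

Fixpoint zeval (V : zmodType) (env : nat -> V) (e : zexpr) : V :=
  match e with
  | ZVar i => env i
  | ZZero => 0
  | ZAdd e1 e2 => zeval env e1 + zeval env e2
  | ZOpp e1 => - zeval env e1
  end.

Fixpoint zcoef (e : zexpr) (i : nat) : int :=
  match e with
  | ZVar j => (i == j)%:Z
  | ZZero => 0
  | ZAdd e1 e2 => zcoef e1 i + zcoef e2 i
  | ZOpp e1 => - zcoef e1 i
  end.

Fixpoint zbound (e : zexpr) : nat :=
  match e with
  | ZVar j => j.+1
  | ZZero => 0
  | ZAdd e1 e2 => maxn (zbound e1) (zbound e2)
  | ZOpp e1 => zbound e1
  end.

Lemma zeval_sum (V : zmodType) (env : nat -> V) e k : (zbound e <= k)%N ->
  zeval env e = \sum_(i < k) env i *~ zcoef e i.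
Proof.
elim: e => [j|_|e1 IH1 e2 IH2|e1 IH1] /=.
- move=> lt_jk; rewrite (bigD1 (Ordinal lt_jk)) //= eqxx mulr1z big1 ?addr0 // => i.
  by rewrite -val_eqE /= => /negbTE ->.
- by rewrite big1 // => i _; rewrite mulr0z.
- rewrite geq_max => /andP[/IH1 -> /IH2 ->]; rewrite -big_split /=.
  by apply: eq_bigr => i _; rewrite mulrzDr.
- by move=> /IH1 ->; rewrite -sumrN; apply: eq_bigr => i _; rewrite mulrNz.
Qed.

Lemma zeval_eq (V : zmodType) (env : nat -> V) e1 e2 :
  all (fun i => zcoef e1 i == zcoef e2 i) (iota 0 (maxn (zbound e1) (zbound e2))) ->
  zeval env e1 = zeval env e2.
Proof.
move=> /allP same_coef; set k := maxn (zbound e1) (zbound e2).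
rewrite (@zeval_sum _ _ e1 k) ?leq_maxl // (@zeval_sum _ _ e2 k) ?leq_maxr //.
apply: eq_bigr => i _; congr (_ *~ _); apply/eqP/same_coef.
by rewrite mem_iota add0n ltn_ord.
Qed.

Ltac zindex t l :=
  lazymatch l with
  | ?x :: ?l' =>
    match constr:(tt) with
    | _ => let _ := match goal with _ => unify t x end in constr:(0%N)
    | _ => let k := zindex t l' in constr:(k.+1)
    end
  end.

Ltac zatoms t l :=
  lazymatch t with
  | ?a + ?b => let l1 := zatoms a l in zatoms b l1
  | - ?a => zatoms a l
  | 0 => l
  | _ => match l with
         | _ => let k := zindex t l in l
         | _ => constr:(t :: l)
         end
  end.

Ltac zreify t l :=
  lazymatch t with
  | ?a + ?b => let x := zreify a l in let y := zreify b l in constr:(ZAdd x y)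
  | - ?a => let x := zreify a l in constr:(ZOpp x)
  | 0 => constr:(ZZero)
  | _ => let k := zindex t l in constr:(ZVar k)
  end.

Ltac abel :=
  lazymatch goal with
  | |- @eq ?V ?lhs ?rhs =>
    let l0 := zatoms lhs (@nil V) in
    let l := zatoms rhs l0 in
    let e1 := zreify lhs l in
    let e2 := zreify rhs l in
    change (zeval (fun i => nth 0 l i) e1 = zeval (fun i => nth 0 l i) e2);
    apply: zeval_eq; vm_compute; reflexivity
  end.

(** * Leibniz superalgebras *)

Section LeibnizSuperalgebra.
Variables (K : fieldType) (V : lmodType K) (p0 : V -> V) (br : V -> V -> V).
Hypothesis leibV : is_leib_super p0 br.

Lemma p0_klinear : klinear p0. Proof. by case: leibV => -[]. Qed.
Lemma p0_idem x : p0 (p0 x) = p0 x. Proof. by case: leibV => -[]. Qed.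
Lemma br_klinearl y : klinear (br^~ y). Proof. by case: leibV => _ []. Qed.
Lemma br_klinearr x : klinear (br x). Proof. by case: leibV => _ []. Qed.

Lemma brDr x : {morph br x : y z / y + z}. Proof. exact: klinearD (br_klinearr x). Qed.
Lemma brZr x k : {morph br x : y / k *: y}. Proof. exact: klinearZ (br_klinearr x) k. Qed.
Lemma brNr x : {morph br x : y / - y}. Proof. exact: klinearN (br_klinearr x). Qed.

Lemma homog_br a b x y :
  homog p0 a x -> homog p0 b y -> homog p0 (a (+) b) (br x y).
Proof. by case: leibV => _ _ + _; apply. Qed.

Lemma homog_split z : homog p0 false (p0 z) /\ homog p0 true (z - p0 z).
Proof. by rewrite /homog p0_idem (klinearB p0_klinear) p0_idem subrr. Qed.

(* Being linear in [z], the identity needs no homogeneity of [z]. *)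
Lemma leibniz_homog a b x y z : homog p0 a x -> homog p0 b y ->
  br (br x y) z = br x (br y z) - (-1) ^+ (a && b) *: br y (br x z).
Proof.
move=> hx hy; case: leibV => _ _ _ leib.
have [hz0 hz1] := homog_split z; rewrite -(subrKC (p0 z) z).
move: (p0 z) (z - p0 z) hz0 hz1 => z0 z1 hz0 hz1.
rewrite !brDr (leib _ _ _ _ _ _ hx hy hz0) (leib _ _ _ _ _ _ hx hy hz1).
by rewrite scalerDr opprD addrACA.
Qed.

Lemma leibniz_homog_der a b x y z : homog p0 a x -> homog p0 b y ->
  br x (br y z) = br (br x y) z + (-1) ^+ (a && b) *: br y (br x z).
Proof. by move=> hx hy; rewrite (leibniz_homog z hx hy) subrK. Qed.
End LeibnizSuperalgebra.

(** * Generation and normal form in stl(m,n,A) *)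

Lemma exists_third_index N (i j : 'I_N) : (3 <= N)%N -> exists k : 'I_N, k != i /\ k != j.
Proof.
move=> leN3; suff /existsP[k /andP[ki kj]] : [exists k, (k != i) && (k != j)] by exists k.
apply: contraLR leN3.
rewrite -ltnNge ltnS negb_exists => /forallP ij_only.
have sub_ij : [set: 'I_N] \subset [set i; j].
  by apply/subsetP => k _; move: (ij_only k); rewrite !inE negb_and !negbK orbC.
by rewrite -[N]card_ord -cardsT (leq_trans (subset_leq_card sub_ij)) // cards2; case: (i != j).
Qed.

Section SteinbergGeneration.
Variables (K : fieldType) (A : algType K) (m n : nat) (L : lmodType K)
  (p0 : L -> L) (br : L -> L -> L) (v : 'I_(m + n) -> 'I_(m + n) -> A -> L).
Hypotheses (leibL : is_leib_super p0 br) (relL : stl_rel p0 br v)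
  (leN3 : (3 <= m + n)%N).
Local Notation I := 'I_(m + n).
Local Notation sgn b := ((-1 : K) ^+ b).

Lemma v_klinear i j : i != j -> klinear (v i j).
Proof. by case: relL => lin_v _ _ _ _ ij; apply: lin_v. Qed.

Lemma v_homog i j a : i != j -> homog p0 (tau i j) (v i j a).
Proof. by case: relL => _ hom_v _ _ _ ij; apply: hom_v. Qed.

Lemma br_v_disjoint i j k l a b : i != j -> k != l -> i != l -> j != k ->
  br (v i j a) (v k l b) = 0.
Proof. by case: relL => _ _ rel2 _ _; move=> *; apply: rel2. Qed.

Lemma br_v_chain i j l a b : i != j -> j != l -> i != l ->
  br (v i j a) (v j l b) = v i l (a * b).
Proof. by case: relL => _ _ _ rel3 _; move=> *; apply: rel3. Qed.

Lemma br_v_cycle i j k a b : i != j -> k != i -> j != k ->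
  br (v i j a) (v k i b) = - (sgn (tau i j && tau k i) *: v k j (b * a)).
Proof. by case: relL => _ _ _ _ rel4; move=> *; apply: rel4. Qed.

Lemma br_v p q x y c d : p != q -> x != y -> ~~ ((x == q) && (y == p)) ->
  br (v p q c) (v x y d) =
  if x == q then v p y (c * d)
  else if y == p then - (sgn (tau p q && tau x p) *: v x q (d * c)) else 0.
Proof.
move=> pq xy not_opp; case: eqP => [exq|/eqP nxq].
  subst x; have yp : y != p by apply: contraNneq not_opp => ->; rewrite !eqxx.
  by apply: br_v_chain; rewrite // eq_sym.
case: eqP => [eyp|/eqP nyp]; first by subst y; apply: br_v_cycle; rewrite // eq_sym.
by apply: br_v_disjoint; rewrite // eq_sym.
Qed.

Lemma v_split i j r a : i != j -> r != i -> r != j -> v i j a = br (v i r a) (v r j 1).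
Proof. by move=> ij ri rj; rewrite br_v_chain ?mulr1 // eq_sym. Qed.

Definition is_v z := exists x y d, x != y /\ z = v x y d.
Definition is_v_at (r : I) z :=
  exists x y d, [/\ x != y, (x == r) || (y == r) & z = v x y d].
Definition is_vv z := is_v z \/
  exists i j k l a b, [/\ i != j, k != l & z = br (v i j a) (v k l b)].

Definition hv i j a b := br (v i j a) (v j i b).

Lemma span_v i j a : i != j -> span is_v (v i j a).
Proof. by move=> ij; apply: span_gen; exists i, j, a. Qed.

Lemma span_v_at r i j a : i != j -> (i == r) || (j == r) -> span (is_v_at r) (v i j a).
Proof. by move=> ij ijr; apply: span_gen; exists i, j, a. Qed.

Lemma span_v_atW r z : span (is_v_at r) z -> span is_v z.
Proof. by apply: span_sub => _ [x [y [d [xy _ ->]]]]; exists x, y, d. Qed.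

Lemma span_vW z : span is_v z -> span is_vv z.
Proof. by apply: span_sub => w; left. Qed.

Lemma span_vv_v_v i j k l a b : i != j -> k != l -> span is_vv (br (v i j a) (v k l b)).
Proof. by move=> ij kl; apply: span_gen; right; exists i, j, k, l, a, b. Qed.

Lemma span_v_br_v p q x y c d : p != q -> x != y -> ~~ ((x == q) && (y == p)) ->
  span is_v (br (v p q c) (v x y d)).
Proof.
move=> pq xy not_opp; rewrite br_v //.
case: eqP => [exq|nxq]; first by apply: span_v; apply: contraNneq not_opp => ->; rewrite exq !eqxx.
case: eqP => [eyp|_]; last exact: span0.
by apply/spanN/spanZ/span_v; apply: contra_not_neq nxq => ->.
Qed.

Lemma span_v_at_br_v r p q x y c d : r != p -> r != q -> p != q -> x != y ->
  (x == r) || (y == r) -> span (is_v_at r) (br (v p q c) (v x y d)).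
Proof.
move=> rp rq pq xy xyr.
have not_opp : ~~ ((x == q) && (y == p)).
  by apply/negP => /andP[/eqP ex /eqP ey]; move: xyr; rewrite ex ey ![_ == r]eq_sym (negbTE rp) (negbTE rq).
rewrite br_v //; case: eqP => [exq|nxq].
  subst x; apply: span_v_at; first by apply: contraNneq not_opp => ->; rewrite !eqxx.
  by move: xyr; rewrite [q == r]eq_sym (negbTE rq) /= => ->; rewrite orbT.
case: eqP => [eyp|_]; last exact: span0.
subst y; apply/spanN/spanZ/span_v_at; first by apply: contra_not_neq nxq => ->.
by move: xyr; rewrite [p == r]eq_sym (negbTE rp) orbF => ->.
Qed.

Lemma span_v_at_brl r p q c z : r != p -> r != q -> p != q ->
  span (is_v_at r) z -> span (is_v_at r) (br (v p q c) z).
Proof.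
move=> rp rq pq; apply: (span_image (f := br _)); first exact: (br_klinearr leibL _).
by move=> _ [x [y [d [xy xyr ->]]]]; apply: span_v_at_br_v.
Qed.

Lemma span_v_at_brr r p q c z : r != p -> r != q -> p != q ->
  span (is_v_at r) z -> span (is_v_at r) (br z (v p q c)).
Proof.
move=> rp rq pq; apply: (span_image (f := br^~ _)); first exact: (br_klinearl leibL _).
move=> _ [x [y [d [xy xyr ->]]]] /=.
have not_opp : ~~ ((p == y) && (q == x)).
  by apply/negP => /andP[/eqP ex /eqP ey]; move: xyr; rewrite -ex -ey ![_ == r]eq_sym (negbTE rp) (negbTE rq).
rewrite br_v //; case: eqP => [epy|npy].
  subst p; apply: span_v_at; first by apply: contraNneq not_opp => ->; rewrite !eqxx.
  by move: xyr; rewrite [y == r]eq_sym (negbTE rp) orbF => ->.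
case: eqP => [eqx|_]; last exact: span0.
subst q; apply/spanN/spanZ/span_v_at; first by apply: contra_not_neq npy => ->.
by move: xyr; rewrite [x == r]eq_sym (negbTE rq) /= => ->; rewrite orbT.
Qed.

Lemma hv_homog p q c a : p != q -> homog p0 (tau p q (+) tau q p) (hv p q c a).
Proof. by move=> pq; apply: (homog_br leibL); apply: v_homog; rewrite // eq_sym. Qed.

Lemma span_v_at_hv_brl r p q c a z : r != p -> r != q -> p != q ->
  span (is_v_at r) z -> span (is_v_at r) (br (hv p q c a) z).
Proof.
move=> rp rq pq z_r; have qp : q != p by rewrite eq_sym.
rewrite /hv (leibniz_homog leibL z (v_homog c pq) (v_homog a qp)).
by apply: spanB; [|apply: spanZ]; apply: span_v_at_brl => //; apply: span_v_at_brl.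
Qed.

Lemma span_v_at_hv_brr r p q c b z : r != p -> r != q -> p != q ->
  span (is_v_at r) z -> span (is_v_at r) (br z (hv p q c b)).
Proof.
move=> rp rq pq; have qp : q != p by rewrite eq_sym.
apply: (span_image (f := br^~ _)); first exact: (br_klinearl leibL _).
move=> _ [x [y [d [xy xyr ->]]]] /=.
rewrite /hv (leibniz_homog_der leibL _ (v_homog d xy) (v_homog c pq)).
apply: spanD; first by apply: span_v_at_brr => //; apply: span_v_at_brr => //; apply: span_v_at.
by apply/spanZ/span_v_at_brl/span_v_at_brr/span_v_at.
Qed.

Lemma span_vv_span_v_v z k l b : k != l -> span is_v z -> span is_vv (br z (v k l b)).
Proof.
move=> kl; apply: (span_image (f := br^~ _)); first exact: (br_klinearl leibL _).
by move=> _ [x [y [d [xy ->]]]]; apply: span_vv_v_v.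
Qed.

Lemma span_vv_v_span_v z k l b : k != l -> span is_v z -> span is_vv (br (v k l b) z).
Proof.
move=> kl; apply: (span_image (f := br _)); first exact: (br_klinearr leibL _).
by move=> _ [x [y [d [xy ->]]]]; apply: span_vv_v_v.
Qed.

(* When [v k l b] is [v p q _] or [v q p _], route it through a third index [r]. *)
Lemma span_vv_hv_v p q c a k l b : p != q -> k != l ->
  span is_vv (br (hv p q c a) (v k l b)).
Proof.
move=> pq kl; have qp : q != p by rewrite eq_sym.
case: (boolP (((k == p) && (l == q)) || ((k == q) && (l == p)))) => [kl_pq|].
  have [r [rp rq]] := exists_third_index p q leN3.
  have [rk rl] : r != k /\ r != l by case/orP: kl_pq => /andP[/eqP -> /eqP ->].
  have kr : k != r by rewrite eq_sym.
  rewrite (v_split b kl rk rl) (leibniz_homog_der leibL _ (hv_homog c a pq) (v_homog b kr)).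
  apply: spanD; [apply: span_vv_span_v_v|apply/spanZ/span_vv_v_span_v] => //;
    apply: (@span_v_atW r); apply: span_v_at_hv_brl => //;
    by apply: span_v_at; rewrite ?eqxx ?orbT.
rewrite negb_or => /andP[not_pq not_qp].
rewrite /hv (leibniz_homog leibL _ (v_homog c pq) (v_homog a qp)).
by apply: spanB; [|apply: spanZ]; apply: span_vv_v_span_v => //; apply: span_v_br_v.
Qed.

Lemma span_vv_v_hv i j a p q c b : i != j -> p != q ->
  span is_vv (br (v i j a) (hv p q c b)).
Proof.
move=> ij pq; case: (boolP ((p == i) && (q == j))) => [/andP[/eqP-> /eqP->]|not_ij].
  have [r [ri rj]] := exists_third_index i j leN3.
  have ir : i != r by rewrite eq_sym.
  rewrite (v_split a ij ri rj) (leibniz_homog leibL _ (v_homog a ir) (v_homog 1 rj)).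
  apply: spanB; [|apply: spanZ]; apply: span_vv_v_span_v => //;
    apply: (@span_v_atW r); apply: span_v_at_hv_brr => //;
    by apply: span_v_at; rewrite ?eqxx ?orbT.
rewrite /hv (leibniz_homog_der leibL _ (v_homog a ij) (v_homog c pq)).
apply: spanD; last by apply/spanZ/span_vv_v_span_v/span_v_br_v; rewrite ?(andbC (q == j)) // eq_sym.
case: (boolP ((p == j) && (q == i))) => [/andP[/eqP-> /eqP->]|not_ji].
  exact: span_vv_hv_v.
by apply/span_vv_span_v_v/span_v_br_v; rewrite // eq_sym.
Qed.

Lemma span_vv_v_br p q c t : p != q -> span is_vv t -> span is_vv (br (v p q c) t).
Proof.
move=> pq; apply: (span_image (f := br _)); first exact: (br_klinearr leibL _).
move=> _ [[i [j [a [ij ->]]]]|[i [j [k [l [a [b [ij kl ->]]]]]]]].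
  exact: span_vv_v_v.
rewrite (leibniz_homog_der leibL _ (v_homog c pq) (v_homog a ij)); apply: spanD.
  case: (boolP ((i == q) && (j == p))) => [/andP[/eqP-> /eqP->]|not_qp].
    exact: span_vv_hv_v.
  by apply/span_vv_span_v_v/span_v_br_v.
apply: spanZ; case: (boolP ((k == q) && (l == p))) => [/andP[/eqP-> /eqP->]|not_qp].
  exact: span_vv_v_hv.
by apply/span_vv_v_span_v/span_v_br_v.
Qed.

Lemma span_vv_br s t : span is_vv s -> span is_vv t -> span is_vv (br s t).
Proof.
move=> + vv_t; apply: (span_image (f := br^~ _)); first exact: (br_klinearl leibL _).
move=> _ [[i [j [a [ij ->]]]]|[i [j [k [l [a [b [ij kl ->]]]]]]]] /=.
  exact: span_vv_v_br.
rewrite (leibniz_homog leibL _ (v_homog a ij) (v_homog b kl)).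
by apply: spanB; [|apply: spanZ]; apply: span_vv_v_br => //; apply: span_vv_v_br.
Qed.

Lemma span_homog_p0 (P : L -> Prop) a x : homog p0 a x -> span P x -> span P (p0 x).
Proof. by case: a => /= ->; [move=> _; apply: span0|]. Qed.

Lemma span_vv_p0 t : span is_vv t -> span is_vv (p0 t).
Proof.
apply: (span_image (f := p0)); first exact: p0_klinear leibL.
move=> _ [[i [j [a [ij ->]]]]|[i [j [k [l [a [b [ij kl ->]]]]]]]].
  exact: span_homog_p0 (v_homog a ij) (span_vW (span_v a ij)).
exact: span_homog_p0 (homog_br leibL (v_homog a ij) (v_homog b kl)) (span_vv_v_v _ _ ij kl).
Qed.

Record vv_sub := VVSub { vv_val : L; vv_valP : vv_val \in spanb is_vv }.
HB.instance Definition _ := [isSub for vv_val].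
HB.instance Definition _ := [Choice of vv_sub by <:].
HB.instance Definition _ := [SubChoice_isSubLmodule of vv_sub by <:].

Lemma vv_subP (s : vv_sub) : span is_vv (vv_val s).
Proof. exact/spanbP/vv_valP. Qed.

Definition vv_in x (vv_x : span is_vv x) : vv_sub := VVSub (introT (spanbP _ _) vv_x).
Definition p0_sub (s : vv_sub) : vv_sub := vv_in (span_vv_p0 (vv_subP s)).
Definition br_sub (s t : vv_sub) : vv_sub := vv_in (span_vv_br (vv_subP s) (vv_subP t)).

Lemma span_vv_v_or0 i j a : span is_vv (if i != j then v i j a else 0).
Proof. by case: ifP => ij; [apply/span_vW/span_v|apply: span0]. Qed.

(* Junk value [0] on the diagonal, where [v i i] is not a generator. *)
Definition v_sub i j a : vv_sub := vv_in (span_vv_v_or0 i j a).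

Lemma v_subE i j a : i != j -> vv_val (v_sub i j a) = v i j a.
Proof. by move=> /= ->. Qed.

Lemma homog_sub a s : homog p0_sub a s <-> homog p0 a (vv_val s).
Proof. by case: a; split=> [/(congr1 vv_val) //|p0s]; apply: val_inj. Qed.

Lemma leib_sub : is_leib_super p0_sub br_sub.
Proof.
split.
- split=> [k x y|x]; apply: val_inj; first exact: (p0_klinear leibL k (val x) (val y)).
  exact: (p0_idem leibL (val x)).
- split=> [y|x] k x1 x2; apply: val_inj.
    exact: (br_klinearl leibL (val y) k (val x1) (val x2)).
  exact: (br_klinearr leibL (val x) k (val x1) (val x2)).
- by move=> a b x y /homog_sub hx /homog_sub hy; apply/homog_sub; have := homog_br leibL hx hy.
- move=> a b c x y z /homog_sub hx /homog_sub hy _; apply: val_inj.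
  by have := leibniz_homog leibL (val z) hx hy.
Qed.

Lemma rel_sub : stl_rel p0_sub br_sub v_sub.
Proof.
split.
- by move=> i j ij k a b; apply: val_inj; rewrite /= ij; apply: v_klinear.
- by move=> i j ij a; apply/homog_sub; rewrite v_subE //; apply: v_homog.
- by move=> i j k l ij kl il jk a b; apply: val_inj; rewrite /= ij kl; apply: br_v_disjoint.
- by move=> i j l ij jl il a b; apply: val_inj; rewrite /= ij jl il; apply: br_v_chain.
- move=> i j k ij ki jk a b; apply: val_inj; rewrite /= ij ki eq_sym jk.
  exact: br_v_cycle.
Qed.

(* By the uniqueness clause of the universal property, the inclusion of the
   subalgebra spanned by the [v]'s and their brackets is onto. *)
Lemma span_vv_stl : is_stl p0 br v -> forall z, span is_vv z.
Proof.
move=> [_ _ univ] z.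
have [f [[lin_f br_f p0_f] f_v _]] := univ _ _ _ _ leib_sub rel_sub.
have [g [_ _ uniq_g]] := univ _ _ _ _ leibL relL.
have hom_f : is_ls_hom p0 br p0 br (vv_val \o f).
  by split=> [k x y|x y|x] /=; rewrite ?lin_f ?br_f ?p0_f.
have f_g : vv_val (f z) = g z.
  by apply: (uniq_g _ hom_f) => i j a ij /=; rewrite f_v ?v_subE.
have id_g : z = g z by apply: (uniq_g id).
by rewrite id_g -f_g; apply: vv_subP.
Qed.

Lemma hv_klinearl i j b : i != j -> klinear (fun a => hv i j a b).
Proof. by move=> ij k x y; rewrite /hv (v_klinear ij) (br_klinearl leibL). Qed.

Lemma hv_klinearr i j a : i != j -> klinear (hv i j a).
Proof. by move=> ij k x y; rewrite /hv (v_klinear (_ : j != i)) 1?eq_sym // (br_klinearr leibL). Qed.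

Lemma hv_mul i j k a b c : i != j -> k != i -> k != j ->
  hv i j (a * b) c = hv i k a (b * c) +
     (sgn (tau i k && tau k j) * sgn (tau i k && tau j i)) *: hv k j b (c * a).
Proof.
move=> ij ki kj; have ik : i != k by rewrite eq_sym.
have ji : j != i by rewrite eq_sym.
rewrite /hv -(br_v_chain a b ik kj ij) (leibniz_homog leibL _ (v_homog a ik) (v_homog b kj)).
rewrite (br_v_chain b c kj ji ki) (br_v_cycle a c ik ji kj).
by rewrite (brNr leibL) (brZr leibL) scalerN opprK scalerA.
Qed.

Lemma hv_split i j k a b : i != j -> k != i -> k != j ->
  hv i j a b = hv i k (a * b) 1 -
     (sgn (tau i j && tau j k) * sgn (tau i j && tau k i)) *: hv j k b a.
Proof.
move=> ij ki kj; have ik : i != k by rewrite eq_sym.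
have jk : j != k by rewrite eq_sym. have ji : j != i by rewrite eq_sym.
rewrite [in LHS]/hv (v_split b ji kj ki).
rewrite (leibniz_homog_der leibL _ (v_homog a ij) (v_homog b jk)).
rewrite (br_v_chain a b ij jk ik) (br_v_cycle a 1 ij ki jk).
by rewrite (brNr leibL) (brZr leibL) scalerN scalerA mul1r.
Qed.

Lemma hv_sub_bilinear i j : i != j -> is_bilinear (fun a b => hv i j a b - hv i j 1 (a * b)).
Proof.
move=> ij; split=> [b|a] k x y /=.
  by rewrite (hv_klinearl b ij) mulrDl -scalerAl (hv_klinearr 1 ij) scalerBr; abel.
by rewrite (hv_klinearr a ij) mulrDr -scalerAr (hv_klinearr 1 ij) scalerBr; abel.
Qed.

Section NormalForm.
Variables (T2 : lmodType K) (t2 : A -> A -> T2) (g : T2 -> L) (o e : I).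
Hypotheses (oe : o != e) (lin_g : klinear g)
  (g_t2 : forall a b, g (t2 a b) = hv o e a b - hv o e 1 (a * b)).

Definition is_nf_gen z :=
  [\/ is_v z, exists x, z = g x | exists j c, j != o /\ z = hv o j 1 c].
Local Notation nf := (span is_nf_gen).

Lemma nf_v z : span is_v z -> nf z.
Proof. by apply: span_sub => w; apply: Or31. Qed.

Lemma nf_g x : nf (g x).
Proof. by apply: span_gen; apply: Or32; exists x. Qed.

Lemma nf_hv_o1 j c : j != o -> nf (hv o j 1 c).
Proof. by move=> jo; apply: span_gen; apply: Or33; exists j, c. Qed.

Lemma nf_hv_oe a b : nf (hv o e a b).
Proof.
have -> : hv o e a b = g (t2 a b) + hv o e 1 (a * b) by rewrite g_t2 subrK.
by apply: spanD; [apply: nf_g|apply: nf_hv_o1; rewrite eq_sym].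
Qed.

Lemma nf_signZ b1 b2 z : nf ((sgn b1 * sgn b2) *: z) -> nf z.
Proof. by rewrite -scalerA => /(spanZ (sgn b1)) /(spanZ (sgn b2)); rewrite !signrZK. Qed.

Lemma nf_hv_1 k j b : k != o -> j != o -> k != j -> nf (hv k j 1 b).
Proof.
move=> ko jo kj; have oj : o != j by rewrite eq_sym.
have := hv_mul 1 1 b oj ko kj; rewrite !mul1r mulr1 => hv_oj.
apply: (@nf_signZ (tau o k && tau k j) (tau o k && tau j o)).
rewrite (_ : _ *: _ = hv o j 1 b - hv o k 1 b); last by rewrite hv_oj addrC addKr.
by apply: spanB; apply: nf_hv_o1.
Qed.

Lemma nf_hv_o j a b : j != o -> nf (hv o j a b).
Proof.
move=> jo; case: (eqVneq j e) => [->|je]; first exact: nf_hv_oe.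
have oj : o != j by rewrite eq_sym.
have eo : e != o by rewrite eq_sym.
have ej : e != j by rewrite eq_sym.
rewrite -[in hv o j a b](mulr1 a) (hv_mul a 1 b oj eo ej) mul1r.
by apply: spanD; [apply: nf_hv_oe|apply/spanZ/nf_hv_1; rewrite 1?eq_sym].
Qed.

Lemma nf_hv_off_o i k a b : i != o -> k != o -> i != k -> nf (hv i k b a).
Proof.
move=> io ko ik; have oi : o != i by rewrite eq_sym.
have ki : k != i by rewrite eq_sym.
apply: (@nf_signZ (tau o i && tau i k) (tau o i && tau k o)).
rewrite (_ : _ *: _ = hv o k (a * b) 1 - hv o i a b); last first.
  by rewrite (hv_split a b oi ko ki) opprB addrC subrK.
by apply: spanB; apply: nf_hv_o.
Qed.

Lemma nf_hv_to_o i a b : i != o -> nf (hv i o a b).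
Proof.
move=> io; have [k [ko ki]] := exists_third_index o i leN3.
have ik : i != k by rewrite eq_sym.
have oi : o != i by rewrite eq_sym.
have ok : o != k by rewrite eq_sym.
have := hv_mul a 1 b ik oi ok; rewrite mulr1 mul1r => hv_ik.
have -> : hv i o a b = hv i k a b -
    (sgn (tau i o && tau o k) * sgn (tau i o && tau k i)) *: hv o k 1 (b * a).
  by rewrite hv_ik addrK.
by apply: spanB; [apply: nf_hv_off_o|apply/spanZ/nf_hv_o1].
Qed.

Lemma nf_hv i j a b : i != j -> nf (hv i j a b).
Proof.
move=> ij; case: (eqVneq i o) => [eio|io]; first by subst i; apply: nf_hv_o; rewrite eq_sym.
case: (eqVneq j o) => [->|jo]; first exact: nf_hv_to_o.
exact: nf_hv_off_o.
Qed.

Lemma nf_vv z : span is_vv z -> nf z.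
Proof.
elim=> [w [vw|[i [j [k [l [a [b [ij kl ->]]]]]]]]| |k x y _ nx _ ny].
- exact/nf_v/span_gen.
- case: (boolP ((k == j) && (l == i))) => [/andP[/eqP-> /eqP->]|not_ji].
    exact: nf_hv.
  exact/nf_v/span_v_br_v.
- exact: span0.
- exact: span_lin.
Qed.

Definition normal_form z := exists z1 x (c : I -> A),
  span is_v z1 /\ z = z1 + g x + \sum_(j | j != o) hv o j 1 (c j).

Lemma sum_hv_o1_lin k (c1 c2 : I -> A) :
  \sum_(j | j != o) hv o j 1 (k *: c1 j + c2 j) =
  k *: \sum_(j | j != o) hv o j 1 (c1 j) + \sum_(j | j != o) hv o j 1 (c2 j).
Proof.
rewrite scaler_sumr -big_split /=; apply: eq_bigr => j jo.
by rewrite (hv_klinearr 1 (_ : o != j)) // eq_sym.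
Qed.

Lemma sum_hv_o1_0 : \sum_(j | j != o) hv o j 1 0 = 0.
Proof. by apply: big1 => j jo; apply: (klinear0 (hv_klinearr _ _)); rewrite eq_sym. Qed.

Lemma normal_form_nf z : nf z -> normal_form z.
Proof.
elim=> [w [vw|[x ->]|[j [c [jo ->]]]]| |k z1 z2 _ [y1 [x1 [c1 [v1 ->]]]] _ [y2 [x2 [c2 [v2 ->]]]]].
- exists w, 0, (fun=> 0); split; first exact: span_gen.
  by rewrite (klinear0 lin_g) sum_hv_o1_0 !addr0.
- exists 0, x, (fun=> 0); split; first exact: span0.
  by rewrite sum_hv_o1_0 add0r addr0.
- exists 0, 0, (fun i => if i == j then c else 0); split; first exact: span0.
  rewrite (klinear0 lin_g) !add0r (bigD1 j) //= eqxx big1 ?addr0 // => i /andP[io ij].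
  by rewrite (negbTE ij); apply: (klinear0 (hv_klinearr _ _)); rewrite eq_sym.
- exists 0, 0, (fun=> 0); split; first exact: span0.
  by rewrite (klinear0 lin_g) sum_hv_o1_0 !addr0.
- exists (k *: y1 + y2), (k *: x1 + x2), (fun j => k *: c1 j + c2 j); split.
    exact: span_lin.
  rewrite sum_hv_o1_lin lin_g !scalerDr.
  by rewrite (addrACA (_ + _) (_ *: _)) (addrACA (k *: y1)).
Qed.

Lemma stl_normal_form : is_stl p0 br v -> forall z, normal_form z.
Proof. by move=> stlL z; apply/normal_form_nf/nf_vv/span_vv_stl. Qed.

Lemma g_hochschild a b c : g (t2 (a * b) c) - g (t2 a (b * c)) - g (t2 b (c * a)) = 0.
Proof.
have [k [ko ke]] := exists_third_index o e leN3.
have E1 := hv_mul a b c oe ko ke.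
have E2 := hv_mul a 1 (b * c) oe ko ke.
have E3 := hv_mul 1 b (c * a) oe ko ke.
have E4 := hv_mul 1 1 (b * c * a) oe ko ke.
rewrite !mul1r !mulr1 !mulrA in E1 E2 E3 E4 *.
rewrite !g_t2 !mulrA E1 E2 E3 E4; abel.
Qed.
End NormalForm.
End SteinbergGeneration.

(** * The superalgebra gl(m,n,A) and its cocycle *)

Section SuperMatrix.
Variables (K : fieldType) (A : algType K) (m n : nat).
Local Notation I := 'I_(m + n).
Local Notation MX := 'M[A]_(m + n).

Lemma tauC (i j : I) : tau i j = tau j i.
Proof. by rewrite /tau eq_sym. Qed.

Lemma tau_trans (i j k : I) : tau i k = tau i j (+) tau j k.
Proof. by rewrite /tau; case: (i < m)%N; case: (j < m)%N; case: (k < m)%N. Qed.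

Definition homog_mx (b : bool) (X : MX) := forall i j, tau i j != b -> X i j = 0.

Lemma homog_mx_part b (X : MX) : homog_mx b (mx_part b X).
Proof. by move=> i j /negbTE tau_ij; rewrite mxE tau_ij. Qed.

Lemma mx_part_homog b b' (X : MX) : homog_mx b X -> mx_part b' X = if b' == b then X else 0.
Proof.
move=> hX; apply/matrixP => i j; rewrite mxE.
case: (eqVneq b' b) => [->|nb]; first by case: eqP => // /eqP /hX.
by rewrite mxE; case: eqP => // tau_ij; apply: hX; rewrite tau_ij.
Qed.

Lemma mx_part_idem b (X : MX) : mx_part b (mx_part b X) = mx_part b X.
Proof. by rewrite (mx_part_homog b (@homog_mx_part b X)) eqxx. Qed.

Lemma mx_part_split (X : MX) : mx_part false X + mx_part true X = X.
Proof. by apply/matrixP => i j; rewrite !mxE; case: (tau i j); rewrite ?addr0 ?add0r. Qed.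

Lemma mx_partD b (X Y : MX) : mx_part b (X + Y) = mx_part b X + mx_part b Y.
Proof. by apply/matrixP => i j; rewrite !mxE; case: ifP; rewrite ?addr0. Qed.

Lemma mx_partZ b c (X : MX) : mx_part b (c *: X) = c *: mx_part b X.
Proof. by apply/matrixP => i j; rewrite !mxE; case: ifP; rewrite ?mulr0. Qed.

Lemma homog_mxB b (X Y : MX) : homog_mx b X -> homog_mx b Y -> homog_mx b (X - Y).
Proof. by move=> hX hY i j tau_ij; rewrite !mxE hX ?hY ?subr0. Qed.

Lemma homog_mxZ b c (X : MX) : homog_mx b X -> homog_mx b (c *: X).
Proof. by move=> hX i j tau_ij; rewrite mxE hX ?mulr0. Qed.

Lemma homog_mx_mul a b (X Y : MX) : homog_mx a X -> homog_mx b Y -> homog_mx (a (+) b) (X *m Y).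
Proof.
move=> hX hY i j tau_ij; rewrite mxE big1 // => k _.
case: (eqVneq (tau i k) a) => [tau_ik|/hX->]; last by rewrite mul0r.
rewrite hY ?mulr0 //; apply: contra tau_ij => /eqP tau_kj.
by rewrite (tau_trans i k j) tau_ik tau_kj.
Qed.

Lemma superbr_homog a b (X Y : MX) : homog_mx a X -> homog_mx b Y ->
  superbr X Y = X *m Y - (-1) ^+ (a && b) *: (Y *m X).
Proof.
move=> hX hY; rewrite /superbr !big_bool /= !(mx_part_homog _ hX) !(mx_part_homog _ hY).
by case: a hX; case: b hY => hY hX /=;
  rewrite ?mul0mx ?mulmx0 ?scaler0 ?subr0 ?addr0 ?add0r.
Qed.

Lemma homog_mx_superbr a b (X Y : MX) :
  homog_mx a X -> homog_mx b Y -> homog_mx (a (+) b) (superbr X Y).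
Proof.
move=> hX hY; rewrite (superbr_homog hX hY).
by apply/homog_mxB/homog_mxZ; [|rewrite addbC]; apply: homog_mx_mul.
Qed.

Lemma superbr_leibniz a b c (X Y Z : MX) : homog_mx a X -> homog_mx b Y -> homog_mx c Z ->
  superbr (superbr X Y) Z =
  superbr X (superbr Y Z) - (-1) ^+ (a && b) *: superbr Y (superbr X Z).
Proof.
move=> hX hY hZ.
rewrite (superbr_homog (homog_mx_superbr hX hY) hZ) (superbr_homog hX (homog_mx_superbr hY hZ)).
rewrite (superbr_homog hY (homog_mx_superbr hX hZ)).
rewrite (superbr_homog hX hY) (superbr_homog hY hZ) (superbr_homog hX hZ) !scaler_sign.
by clear hX hY hZ; case: a; case: b; case: c => /=;
  rewrite ?(mulmxDl, mulmxDr, mulmxN, mulNmx, opprK, opprD, mulmxA); abel.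
Qed.

Lemma Eunit_mulmx (i j k l : I) a b :
  Eunit i j a *m Eunit k l b = if j == k then Eunit i l (a * b) else 0 :> MX.
Proof.
apply/matrixP => p q; rewrite mxE; case: eqP => [<-|/eqP njk].
  rewrite mxE (bigD1 j) //= !mxE !eqxx andbT big1 ?addr0 => [|r /negbTE nrj].
    by case: (p == i); case: (q == l); rewrite /= ?mulr0 ?mul0r.
  by rewrite !mxE nrj andbF mul0r.
rewrite mxE big1 // => r _; rewrite !mxE.
by case: (eqVneq r j) => [->|_]; rewrite ?(negbTE njk) ?andbF ?mulr0 ?mul0r.
Qed.

Lemma homog_Eunit (i j : I) a : homog_mx (tau i j) (Eunit i j a).
Proof. by move=> p q; rewrite mxE; case: andP => // -[/eqP-> /eqP->]; rewrite eqxx. Qed.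

Lemma superbr_Eunit (i j k l : I) a b :
  superbr (Eunit i j a) (Eunit k l b) =
  (if j == k then Eunit i l (a * b) else 0 : MX) -
  (-1) ^+ (tau i j && tau k l) *: (if l == i then Eunit k j (b * a) else 0).
Proof. by rewrite (superbr_homog (@homog_Eunit i j a) (@homog_Eunit k l b)) !Eunit_mulmx. Qed.

Lemma Eunit_lin (i j : I) (k : K) (a b : A) :
  Eunit i j (k *: a + b) = k%:A *: Eunit i j a + Eunit i j b.
Proof. by apply/matrixP => p q; rewrite !mxE mulr_algl; case: ifP; rewrite ?scaler0 ?addr0. Qed.

Lemma EunitB (i j : I) (a b : A) : Eunit i j (a - b) = Eunit i j a - Eunit i j b.
Proof. by apply/matrixP => p q; rewrite !mxE; case: ifP; rewrite ?subr0. Qed.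

Lemma mulmx_alg_scaler (k : K) (X Y : MX) : X *m (k%:A *: Y) = k%:A *: (X *m Y).
Proof.
apply/matrixP => i j; rewrite !mxE mulr_algl scaler_sumr; apply: eq_bigr => l _.
by rewrite mxE mulr_algl scalerAr.
Qed.

Lemma superbrDl (X1 X2 Y : MX) : superbr (X1 + X2) Y = superbr X1 Y + superbr X2 Y.
Proof.
rewrite /superbr -big_split; apply: eq_bigr => a _; rewrite -big_split; apply: eq_bigr => b _ /=.
by rewrite mx_partD mulmxDl mulmxDr scalerDr opprD addrACA.
Qed.

Lemma superbrDr (X Y1 Y2 : MX) : superbr X (Y1 + Y2) = superbr X Y1 + superbr X Y2.
Proof.
rewrite /superbr -big_split; apply: eq_bigr => a _; rewrite -big_split; apply: eq_bigr => b _ /=.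
by rewrite mx_partD mulmxDl mulmxDr scalerDr opprD addrACA.
Qed.

Lemma superbr_alg_scalel (k : K) (X Y : MX) : superbr (k%:A *: X) Y = k%:A *: superbr X Y.
Proof.
rewrite /superbr scaler_sumr; apply: eq_bigr => a _; rewrite scaler_sumr; apply: eq_bigr => b _ /=.
rewrite mx_partZ -scalemxAl mulmx_alg_scaler scalerBr !scalerA.
by rewrite (commr_sign (k%:A) (a && b)).
Qed.

Lemma superbr_alg_scaler (k : K) (X Y : MX) : superbr X (k%:A *: Y) = k%:A *: superbr X Y.
Proof.
rewrite /superbr scaler_sumr; apply: eq_bigr => a _; rewrite scaler_sumr; apply: eq_bigr => b _ /=.
rewrite mx_partZ -scalemxAl mulmx_alg_scaler scalerBr !scalerA.
by rewrite (commr_sign (k%:A) (a && b)).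
Qed.
End SuperMatrix.

Section AlgebraMatrixModule.
Variables (K : fieldType) (A : algType K) (N : nat).

(* Matrices over [A] as a [K]-module, [K] acting through [k |-> k%:A]. *)
Definition Kmx := 'M[A]_N.
HB.instance Definition _ := GRing.Zmodule.on Kmx.

Definition Kmx_scale (k : K) (X : Kmx) : Kmx := k%:A *: (X : 'M[A]_N).

Lemma Kmx_scaleA a b (X : Kmx) : Kmx_scale a (Kmx_scale b X) = Kmx_scale (a * b) X.
Proof. by rewrite /Kmx_scale scalerA mulr_algl scalerA. Qed.

Lemma Kmx_scale1 : left_id 1 Kmx_scale.
Proof. by move=> X; rewrite /Kmx_scale !scale1r. Qed.

Lemma Kmx_scaleDr : right_distributive Kmx_scale +%R.
Proof. by move=> k X Y; rewrite /Kmx_scale scalerDr. Qed.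

Lemma Kmx_scaleDl (X : Kmx) : {morph Kmx_scale^~ X : a b / a + b}.
Proof. by move=> a b; rewrite /Kmx_scale !scalerDl. Qed.

HB.instance Definition _ := GRing.Zmodule_isLmodule.Build K Kmx
  Kmx_scaleA Kmx_scale1 Kmx_scaleDr Kmx_scaleDl.

Lemma Kmx_scaleE (k : K) (X : Kmx) : k *: X = k%:A *: (X : 'M[A]_N) :> 'M[A]_N.
Proof. by []. Qed.
End AlgebraMatrixModule.

Section SupertraceCocycle.
Variables (K : fieldType) (A : algType K) (m n : nat) (T2 T3 : lmodType K)
  (t2 : A -> A -> T2) (t3 : A -> A -> A -> T3) (d2 : T3 -> T2).
Hypotheses (t2_bilin : is_bilinear t2) (lin_d2 : klinear d2)
  (d2_t3 : forall a0 a1 a2,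
      d2 (t3 a0 a1 a2) = t2 (a0 * a1) a2 - t2 a0 (a1 * a2) - t2 a1 (a2 * a0)).
Local Notation I := 'I_(m + n).
Local Notation MX := 'M[A]_(m + n).

Let t2_klinearl b : klinear (t2^~ b). Proof. by case: t2_bilin. Qed.
Let t2_klinearr a : klinear (t2 a). Proof. by case: t2_bilin. Qed.
Let t20l b : t2 0 b = 0. Proof. exact: klinear0 (t2_klinearl b). Qed.
Let t20r a : t2 a 0 = 0. Proof. exact: klinear0 (t2_klinearr a). Qed.

Definition block_sign (p : I) : K := (-1) ^+ (m <= p)%N.

Lemma block_sign_tau (p s : I) : block_sign p = (-1) ^+ tau p s * block_sign s.
Proof.
rewrite /block_sign /tau [(m <= p)%N]leqNgt [(m <= s)%N]leqNgt.
by case: (p < m)%N; case: (s < m)%N; rewrite /= ?mul1r ?mulN1r ?opprK.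
Qed.

Definition str2 (X Y : MX) : T2 :=
  \sum_(p : I) \sum_(r : I) block_sign p *: t2 (X p r) (Y r p).
Definition str3 (X Y Z : MX) : T3 :=
  \sum_(p : I) \sum_(s : I) \sum_(r : I) block_sign p *: t3 (X p s) (Y s r) (Z r p).

Lemma str2Dl (X1 X2 Y : MX) : str2 (X1 + X2) Y = str2 X1 Y + str2 X2 Y.
Proof.
rewrite /str2 -big_split; apply: eq_bigr => p _; rewrite -big_split; apply: eq_bigr => r _ /=.
by rewrite mxE (klinearD (t2_klinearl _)) scalerDr.
Qed.

Lemma str2Dr (X Y1 Y2 : MX) : str2 X (Y1 + Y2) = str2 X Y1 + str2 X Y2.
Proof.
rewrite /str2 -big_split; apply: eq_bigr => p _; rewrite -big_split; apply: eq_bigr => r _ /=.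
by rewrite mxE (klinearD (t2_klinearr _)) scalerDr.
Qed.

Lemma str2Nl (X Y : MX) : str2 (- X) Y = - str2 X Y.
Proof.
rewrite /str2 -sumrN; apply: eq_bigr => p _; rewrite -sumrN; apply: eq_bigr => r _.
by rewrite mxE (klinearN (t2_klinearl _)) scalerN.
Qed.

Lemma str2Nr (X Y : MX) : str2 X (- Y) = - str2 X Y.
Proof.
rewrite /str2 -sumrN; apply: eq_bigr => p _; rewrite -sumrN; apply: eq_bigr => r _.
by rewrite mxE (klinearN (t2_klinearr _)) scalerN.
Qed.

Lemma str2_alg_scalel (k : K) (X Y : MX) : str2 (k%:A *: X) Y = k *: str2 X Y.
Proof.
rewrite /str2 scaler_sumr; apply: eq_bigr => p _; rewrite scaler_sumr; apply: eq_bigr => r _ /=.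
by rewrite mxE mulr_algl (klinearZ (t2_klinearl _)) !scalerA mulrC.
Qed.

Lemma str2_alg_scaler (k : K) (X Y : MX) : str2 X (k%:A *: Y) = k *: str2 X Y.
Proof.
rewrite /str2 scaler_sumr; apply: eq_bigr => p _; rewrite scaler_sumr; apply: eq_bigr => r _ /=.
by rewrite mxE mulr_algl (klinearZ (t2_klinearr _)) !scalerA mulrC.
Qed.

Lemma str2_homog_eq0 a b (X Y : MX) : homog_mx a X -> homog_mx b Y -> a != b -> str2 X Y = 0.
Proof.
move=> hX hY ab; rewrite /str2 big1 // => p _; rewrite big1 // => r _.
case: (eqVneq (tau p r) a) => [tau_pr|/hX->]; last by rewrite t20l scaler0.
by rewrite hY ?t20r ?scaler0 // tauC tau_pr.
Qed.

Lemma str2_mulmx_d2 a (X Y Z : MX) : homog_mx a X ->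
  str2 (X *m Y) Z - str2 X (Y *m Z) - (-1) ^+ a *: str2 Y (Z *m X) = d2 (str3 X Y Z).
Proof.
move=> hX; set S := fun (u : A -> A -> A -> T2) =>
  \sum_(p : I) \sum_(s : I) \sum_(r : I) block_sign p *: u (X p s) (Y s r) (Z r p).
have -> : str2 (X *m Y) Z = S (fun x y z => t2 (x * y) z).
  rewrite /str2; apply: eq_bigr => p _.
  under eq_bigr => r _ do rewrite mxE (klinear_sum (t2_klinearl _)) scaler_sumr.
  exact: exchange_big.
have -> : str2 X (Y *m Z) = S (fun x y z => t2 x (y * z)).
  apply: eq_bigr => p _; apply: eq_bigr => s _.
  by rewrite mxE (klinear_sum (t2_klinearr _)) scaler_sumr.
(* Moving [X p s] to the end of the cycle changes [block_sign s] into [block_sign p]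
   at the price of the sign [(-1) ^+ tau p s], which is [(-1) ^+ a] unless [X p s = 0]. *)
have -> : (-1) ^+ a *: str2 Y (Z *m X) = S (fun x y z => t2 y (z * x)).
  rewrite /str2 scaler_sumr.
  transitivity (\sum_(s : I) \sum_(r : I) \sum_(p : I)
      block_sign p *: t2 (Y s r) (Z r p * X p s)).
    apply: eq_bigr => s _; rewrite scaler_sumr; apply: eq_bigr => r _.
    rewrite mxE (klinear_sum (t2_klinearr _)) !scaler_sumr; apply: eq_bigr => p _.
    rewrite scalerA (block_sign_tau p s).
    case: (eqVneq (tau p s) a) => [->//|/hX->].
    by rewrite mulr0 t20r !scaler0.
  by under eq_bigr => s _ do rewrite exchange_big /=; rewrite exchange_big.
rewrite /str3 !(klinear_sum lin_d2) -!sumrB; apply: eq_bigr => p _.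
rewrite !(klinear_sum lin_d2) -!sumrB; apply: eq_bigr => s _.
rewrite !(klinear_sum lin_d2) -!sumrB; apply: eq_bigr => r _.
by rewrite (klinearZ lin_d2) d2_t3 !scalerBr.
Qed.

Lemma str2_leibniz a b c (X Y Z : MX) : homog_mx a X -> homog_mx b Y -> homog_mx c Z ->
  str2 (superbr X Y) Z - (str2 X (superbr Y Z) - (-1) ^+ (a && b) *: str2 Y (superbr X Z)) =
  d2 (str3 X Y Z - (-1) ^+ (a && b) *: str3 Y X Z).
Proof.
move=> hX hY hZ.
rewrite (klinearB lin_d2) (klinearZ lin_d2) -(str2_mulmx_d2 _ _ hX) -(str2_mulmx_d2 _ _ hY).
rewrite (superbr_homog hX hY) (superbr_homog hY hZ) (superbr_homog hX hZ) !scaler_sign.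
have hZX := homog_mx_mul hZ hX; have hZY := homog_mx_mul hZ hY.
move: hX hY hZ hZX hZY.
case: a; case: b; case: c => /= hX hY hZ hZX hZY;
  rewrite ?(str2Dl, str2Dr, str2Nl, str2Nr, opprK, opprD) ?scaler_sign;
  try (rewrite (str2_homog_eq0 hY hZX); [|done]);
  try (rewrite (str2_homog_eq0 hX hZY); [|done]);
  abel.
Qed.

Local Notation Q := {ideal_quot (spanb (in_range d2))}.
Local Notation KMX := (Kmx A (m + n)).

(* The central extension [gl(m,n,A) (+) HH] by the cocycle [str2], where [HH]
   is the quotient of [A (x) A] by [Im d2]. *)
Definition brM (x y : KMX * Q) : KMX * Q :=
  (superbr x.1 y.1 : KMX, \pi_Q (str2 x.1 y.1)).
Definition p0M (x : KMX * Q) : KMX * Q := (mx_part false x.1 : KMX, x.2).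
Definition vM (i j : I) (a : A) : KMX * Q := (Eunit i j a : KMX, 0).

Lemma homogM a (x : KMX * Q) : homog p0M a x <-> homog_mx a x.1 /\ (a -> x.2 = 0).
Proof.
case: x => X q; case: a; split=> /=.
- case=> X0 ->; split=> //; rewrite -(mx_part_split X) X0 add0r; exact: homog_mx_part.
- by case=> hX /(_ isT) ->; congr (_, _); rewrite /= (mx_part_homog false hX).
- by move=> /(congr1 fst) /= XX; split=> //; rewrite -XX; apply: homog_mx_part.
- by case=> hX _; congr (_, _); rewrite /= (mx_part_homog false hX).
Qed.

Lemma pi_str2_leibniz a b c (X Y Z : MX) : homog_mx a X -> homog_mx b Y -> homog_mx c Z ->
  \pi_Q (str2 (superbr X Y) Z) =
  \pi_Q (str2 X (superbr Y Z)) - (-1) ^+ (a && b) *: \pi_Q (str2 Y (superbr X Z)).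
Proof.
move=> hX hY hZ; apply/eqP; rewrite -subr_eq0 -(klinearZ (pi_klinear _)).
rewrite -!(klinearB (pi_klinear _)) (str2_leibniz hX hY hZ); apply/eqP/pi_eq0.
by apply: span_gen; eexists.
Qed.

Lemma leibM : is_leib_super p0M brM.
Proof.
split.
- by split=> [k x y|x]; congr (_, _); rewrite /= ?mx_partD ?mx_partZ ?mx_part_idem.
- split=> [y|x] k x1 x2; congr (_, _) => /=.
  + by rewrite superbrDl superbr_alg_scalel.
  + by rewrite str2Dl str2_alg_scalel (pi_klinear _).
  + by rewrite superbrDr superbr_alg_scaler.
  + by rewrite str2Dr str2_alg_scaler (pi_klinear _).
- move=> a b x y /homogM[hx _] /homogM[hy _]; apply/homogM; split=> /=.
    exact: homog_mx_superbr.
  by case: a b hx hy => [] [] //= hx hy _; rewrite (str2_homog_eq0 hx hy) ?pi_zeror.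
- move=> a b c x y z /homogM[hx _] /homogM[hy _] /homogM[hz _]; congr (_, _) => /=.
    by rewrite (superbr_leibniz hx hy hz) scaler_sign [in RHS]scaler_sign.
  exact: pi_str2_leibniz hx hy hz.
Qed.

Lemma str2_Eunit (i j k l : I) a b :
  str2 (Eunit i j a) (Eunit k l b) = if (k == j) && (l == i) then block_sign i *: t2 a b else 0.
Proof.
rewrite /str2 (bigD1 i) //= [X in _ + X]big1 ?addr0 => [|p /negbTE pi]; last first.
  by apply: big1 => r _; rewrite mxE pi t20l scaler0.
rewrite (bigD1 j) //= [X in _ + X]big1 ?addr0 => [|r /negbTE rj]; last first.
  by rewrite mxE eqxx rj t20l scaler0.
rewrite !mxE !eqxx [j == k]eq_sym [i == l]eq_sym.
by case: ifP => _; rewrite ?t20r ?scaler0.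
Qed.

Lemma relM : stl_rel p0M brM vM.
Proof.
split.
- by move=> i j ij k a b; congr (_, _); rewrite /= ?Eunit_lin ?scaler0 ?addr0.
- by move=> i j ij a; apply/homogM; split=> //=; apply: homog_Eunit.
- move=> i j k l ij kl il jk a b; congr (_, _) => /=.
    by rewrite superbr_Eunit (negbTE jk) eq_sym (negbTE il) scaler0 subr0.
  by rewrite str2_Eunit eq_sym (negbTE jk) pi_zeror.
- move=> i j l ij jl il a b; congr (_, _) => /=.
    by rewrite superbr_Eunit eqxx eq_sym (negbTE il) scaler0 subr0.
  by rewrite str2_Eunit eqxx eq_sym (negbTE il) pi_zeror.
- move=> i j k ij ki jk a b; congr (_, _) => /=.
    by rewrite superbr_Eunit (negbTE jk) eqxx sub0r !scaler_sign.
  by rewrite str2_Eunit eq_sym (negbTE jk) pi_zeror scaler0 oppr0.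
Qed.
End SupertraceCocycle.

(** * The kernel of psi *)

Section TensorExt.
Variables (K : fieldType) (A : algType K) (W : lmodType K).

Lemma tensor2_ext (T2 : lmodType K) (t2 : A -> A -> T2) (f1 f2 : T2 -> W) :
  is_tensor2 t2 -> klinear f1 -> klinear f2 ->
  (forall a b, f1 (t2 a b) = f2 (t2 a b)) -> forall x, f1 x = f2 x.
Proof.
move=> [[t2_lin1 t2_lin2] univ] lin_f1 lin_f2 f12 x.
have bilin : is_bilinear (fun a b => f2 (t2 a b)).
  by split=> [b|a] k a1 a2 /=; rewrite ?t2_lin1 ?t2_lin2 lin_f2.
have [g [_ _ uniq_g]] := univ W _ bilin.
by rewrite (uniq_g f1 lin_f1 f12) (uniq_g f2 lin_f2 (fun _ _ => erefl)).
Qed.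

Lemma tensor3_ext (T3 : lmodType K) (t3 : A -> A -> A -> T3) (f1 f2 : T3 -> W) :
  is_tensor3 t3 -> klinear f1 -> klinear f2 ->
  (forall a b c, f1 (t3 a b c) = f2 (t3 a b c)) -> forall x, f1 x = f2 x.
Proof.
move=> [[t3_lin1 [t3_lin2 t3_lin3]] univ] lin_f1 lin_f2 f12 x.
have trilin : is_trilinear (fun a b c => f2 (t3 a b c)).
  by split; [|split] => [b c|a c|a b] k a1 a2 /=; rewrite ?t3_lin1 ?t3_lin2 ?t3_lin3 lin_f2.
have [g [_ _ uniq_g]] := univ W _ trilin.
by rewrite (uniq_g f1 lin_f1 f12) (uniq_g f2 lin_f2 (fun _ _ _ => erefl)).
Qed.
End TensorExt.

Section Kernel.
Variables (K : fieldType) (A : algType K) (m n : nat) (L : lmodType K)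
  (p0 : L -> L) (br : L -> L -> L) (v : 'I_(m + n) -> 'I_(m + n) -> A -> L)
  (psi : L -> 'M[A]_(m + n)).
Hypotheses (leibL : is_leib_super p0 br) (relL : stl_rel p0 br v)
  (psi_lin : forall (k : K) x y, psi (k *: x + y) = k%:A *: psi x + psi y)
  (psi_br : forall x y, psi (br x y) = superbr (psi x) (psi y))
  (psi_v : forall i j a, i != j -> psi (v i j a) = Eunit i j a).
Local Notation I := 'I_(m + n).
Local Notation MX := 'M[A]_(m + n).
Local Notation hv := (hv br v).

Lemma psi_klinear : klinear (psi : L -> Kmx A (m + n)).
Proof. exact: psi_lin. Qed.

Lemma psi_entry_lin (k : K) x y p q : psi (k *: x + y) p q = k *: psi x p q + psi y p q.
Proof. by rewrite psi_lin !mxE mulr_algl. Qed.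

Lemma psi_hv i j a b : i != j ->
  psi (hv i j a b) = Eunit i i (a * b) - (-1) ^+ tau i j *: Eunit j j (b * a).
Proof.
move=> ij; have ji : j != i by rewrite eq_sym.
by rewrite psi_br !psi_v // superbr_Eunit !eqxx [tau j i]tauC andbb.
Qed.

Lemma span_v_psiE z : span (is_v v) z ->
  (forall p, psi z p p = 0) /\ z = \sum_(p : I) \sum_(q | p != q) v p q (psi z p q).
Proof.
have v0 p q : p != q -> v p q 0 = 0 by move=> pq; apply: (klinear0 (v_klinear relL pq)).
elim=> [_ [i [j [a [ij ->]]]]| |k x y _ [dx ex] _ [dy ey]].
- rewrite psi_v //; split=> [p|].
    by rewrite mxE; case: (eqVneq p i) => [->|]; rewrite ?(negbTE ij) ?andbF.
  rewrite (bigD1 i) //= (bigD1 j) //= big1 ?addr0 => [|q /andP[iq /negbTE qj]]; last first.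
    by rewrite mxE eqxx qj v0.
  rewrite big1 ?addr0 => [|p /negbTE pi]; last by apply: big1 => q pq; rewrite mxE pi v0.
  by rewrite mxE !eqxx.
- rewrite (klinear0 psi_klinear); split=> [p|]; first by rewrite mxE.
  by symmetry; apply: big1 => p _; apply: big1 => q pq; rewrite mxE v0.
- split=> [p|]; first by rewrite psi_entry_lin dx dy scaler0 addr0.
  rewrite {1}ex {1}ey scaler_sumr -big_split; apply: eq_bigr => p _.
  rewrite scaler_sumr -big_split; apply: eq_bigr => q pq /=.
  by rewrite psi_entry_lin (v_klinear relL pq).
Qed.

Section KernelIsHH1.
Variables (T2 : lmodType K) (t2 : A -> A -> T2) (d1 : T2 -> A) (g : T2 -> L) (o e : I).
Hypotheses (leN3 : (3 <= m + n)%N) (oe : o != e) (lin_g : klinear g)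
  (g_t2 : forall a b, g (t2 a b) = hv o e a b - hv o e 1 (a * b))
  (tensorT2 : is_tensor2 t2) (lin_d1 : klinear d1)
  (d1_t2 : forall a0 a1, d1 (t2 a0 a1) = a0 * a1 - a1 * a0).

Lemma psi_g x : psi (g x) = (-1) ^+ tau o e *: Eunit e e (d1 x).
Proof.
pose f1 x : Kmx A (m + n) := psi (g x).
pose f2 x : Kmx A (m + n) := (-1) ^+ tau o e *: Eunit e e (d1 x).
have lin_f1 : klinear f1 by move=> k y z; rewrite /f1 lin_g psi_klinear.
have lin_f2 : klinear f2.
  move=> k y z; rewrite /f2 lin_d1 Eunit_lin scalerDr !Kmx_scaleE !scalerA.
  by rewrite (commr_sign (k%:A)).
apply: (tensor2_ext tensorT2 lin_f1 lin_f2) => a b.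
rewrite /f1 /f2 g_t2 (klinearB psi_klinear) !psi_hv // d1_t2 EunitB !mul1r !mulr1.
by rewrite !scaler_sign; case: (tau o e); abel.
Qed.

Lemma psi_normal_form z1 x (c : I -> A) p q :
  psi (z1 + g x + \sum_(j | j != o) hv o j 1 (c j)) p q =
  psi z1 p q + (-1) ^+ tau o e * (if (p == e) && (q == e) then d1 x else 0)
  + \sum_(j | j != o) ((if (p == o) && (q == o) then c j else 0)
                       - (-1) ^+ tau o j * (if (p == j) && (q == j) then c j else 0)).
Proof.
rewrite !(klinearD psi_klinear) (klinear_sum psi_klinear) psi_g !mxE summxE.
congr (_ + _); apply: eq_bigr => j jo; have oj : o != j by rewrite eq_sym.
by rewrite psi_hv // mul1r mulr1 !mxE.
Qed.

Lemma ker_psi_normal_form z1 x (c : I -> A) : span (is_v v) z1 ->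
  psi (z1 + g x + \sum_(j | j != o) hv o j 1 (c j)) = 0 ->
  [/\ z1 = 0, d1 x = 0 & forall j, j != o -> c j = 0].
Proof.
move=> v_z1 psi_z; have [diag_z1 ez1] := span_v_psiE v_z1.
have entry p q := psi_normal_form z1 x c p q; rewrite psi_z in entry.
have ne_eq p q r : p != q -> (p == r) && (q == r) = false.
  by move=> pq; apply: contraNF pq => /andP[/eqP-> /eqP->].
have sign_cancel b (y : A) : (-1) ^+ b * y = 0 -> y = 0.
  by move=> sy0; rewrite -(signrMK b y) sy0 mulr0.
have sum_diag j : j != o -> \sum_(i | i != o) ((if (j == o) && (j == o) then c i else 0)
    - (-1) ^+ tau o i * (if (j == i) && (j == i) then c i else 0)) = - ((-1) ^+ tau o j * c j).
  move=> jo; rewrite (bigD1 j) //= !eqxx (negbTE jo) sub0r big1 ?addr0 // => i /andP[_ ji].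
  by rewrite eq_sym (negbTE ji) mulr0 subrr.
have c0 j : j != o -> j != e -> c j = 0.
  move=> jo je; have := entry j j; rewrite mxE diag_z1 add0r (negbTE je) mulr0 add0r sum_diag //.
  by move/esym/eqP; rewrite oppr_eq0 => /eqP /sign_cancel.
have eo : e != o by rewrite eq_sym.
have ce : c e = 0.
  have := entry o o; rewrite mxE diag_z1 add0r (negbTE oe) mulr0 add0r.
  rewrite (bigD1 e) //= eqxx (negbTE oe) mulr0 subr0 big1 ?addr0 => [<-//|j /andP[jo je]].
  have oj : o != j by rewrite eq_sym.
  by rewrite (negbTE oj) mulr0 subr0 c0.
split.
- rewrite ez1; apply: big1 => p _; apply: big1 => q pq.
  have := entry p q; rewrite mxE !ne_eq // mulr0 addr0 big1 ?addr0 => [<-|j _].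
    exact: (klinear0 (v_klinear relL pq)).
  by rewrite ne_eq // mulr0 subrr.
- by have := entry e e; rewrite mxE diag_z1 add0r eqxx sum_diag // ce mulr0 oppr0 addr0 => /esym /sign_cancel.
- by move=> j jo; case: (eqVneq j e) => [->|]; [apply: ce|apply: c0].
Qed.

Lemma g_ker_d1 x : d1 x = 0 -> psi (g x) = 0.
Proof.
move=> d1x; rewrite psi_g d1x.
by rewrite (_ : Eunit e e 0 = 0) ?scaler0 //; apply/matrixP => p q; rewrite !mxE if_same.
Qed.

Lemma ker_psi_g_ker_d1 : is_stl p0 br v ->
  forall z, psi z = 0 -> exists x, d1 x = 0 /\ g x = z.
Proof.
move=> stlL z psi_z.
have [z1 [x [c [v_z1 ez]]]] := stl_normal_form leibL relL leN3 oe lin_g g_t2 stlL z.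
rewrite ez in psi_z *; have [-> d1x c0] := ker_psi_normal_form v_z1 psi_z.
exists x; split=> //; rewrite add0r big1 ?addr0 // => j jo.
have oj : o != j by rewrite eq_sym.
by rewrite c0 // (klinear0 (hv_klinearr leibL relL 1 oj)).
Qed.

Variables (T3 : lmodType K) (t3 : A -> A -> A -> T3) (d2 : T3 -> T2).
Hypotheses (tensorT3 : is_tensor3 t3) (lin_d2 : klinear d2)
  (d2_t3 : forall a0 a1 a2,
      d2 (t3 a0 a1 a2) = t2 (a0 * a1) a2 - t2 a0 (a1 * a2) - t2 a1 (a2 * a0)).

Lemma g_d2_eq0 y : g (d2 y) = 0.
Proof.
have lin_gd2 : klinear (g \o d2) by move=> k a b /=; rewrite lin_d2 lin_g.
have lin0 : klinear (fun _ : T3 => 0 : L) by move=> k a b; rewrite scaler0 addr0.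
apply: (tensor3_ext tensorT3 lin_gd2 lin0) => a b c /=.
by rewrite d2_t3 !(klinearB lin_g) (g_hochschild leibL relL leN3 oe g_t2).
Qed.

Lemma t2_1_in_range_d2 c : in_range d2 (t2 1 c).
Proof. by exists (- t3 1 1 c); rewrite (klinearN lin_d2) d2_t3 !mul1r mulr1 subrr sub0r opprK. Qed.

(* The lift of [psi] to the central extension by [HH] sends [g x] to
   [(0, +- class of x)], so [g x = 0] forces [x] into [Im d2]. *)
Lemma g_eq0_in_range_d2 : is_stl p0 br v -> forall x, g x = 0 -> in_range d2 x.
Proof.
move=> [_ _ univ] x gx0; have t2_bilin : is_bilinear t2 by case: tensorT2.
have [f [[lin_f br_f _] f_v _]] :=
  univ _ _ _ _ (leibM m n t2_bilin lin_d2 d2_t3) (relM m n d2 t2_bilin).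
pose HH := {ideal_quot (spanb (in_range d2))}.
have f_g y : (f (g y)).2 = block_sign K o *: \pi_HH y.
  have lin_fg : klinear (fun y => (f (g y)).2) by move=> k a b; rewrite lin_g lin_f.
  have lin_pi : klinear (fun y => block_sign K o *: \pi_HH y).
    by move=> k a b; rewrite (pi_klinear _) scalerDr !scalerA mulrC.
  apply: (tensor2_ext tensorT2 lin_fg lin_pi) => a b /=.
  have eo : e != o by rewrite eq_sym.
  rewrite g_t2 (klinearB lin_f) /hv !br_f !f_v //= !(str2_Eunit t2_bilin) !eqxx /=.
  have -> : \pi_HH (block_sign K o *: t2 1 (a * b)) = 0.
    exact/pi_eq0/spanZ/span_gen/t2_1_in_range_d2.
  by rewrite subr0 (klinearZ (pi_klinear _)).
apply: (span_in_range lin_d2); apply/pi_eq0.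
have := f_g x; rewrite gx0 (klinear0 lin_f) => /esym/(congr1 (fun q => block_sign K o *: q)).
by rewrite /block_sign signrZK scaler0.
Qed.
End KernelIsHH1.
End Kernel.

Theorem theorem4p2
  (K : fieldType) (A : algType K) (m n : nat)
  (* standing assumption of the paper *)
  (hK2 : 2%N \notin [pchar K]) (hK3 : 3%N \notin [pchar K])
  (* hypotheses of the theorem *)
  (hmn : (3 <= m + n)%N)
  (h4 : (m + n)%N = 4%N -> 2%N \notin [pchar K])
  (h3 : (m + n)%N = 3%N -> 3%N \notin [pchar K])
  (* stl(m,n,A) *)
  (L : lmodType K) (p0 : L -> L) (br : L -> L -> L)
  (v : 'I_(m + n) -> 'I_(m + n) -> A -> L)
  (hL : is_stl p0 br v)
  (* psi : stl(m,n,A) -> gl(m,n,A), v_ij(a) |-> E_ij(a) *)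
  (psi : L -> 'M[A]_(m + n))
  (psi_lin : forall (k : K) x y, psi (k *: x + y) = (k%:A) *: psi x + psi y)
  (psi_br : forall x y, psi (br x y) = superbr (psi x) (psi y))
  (psi_v : forall i j a, i != j -> psi (v i j a) = Eunit i j a)
  (* A (x) A and A (x) A (x) A, and the Hochschild differentials *)
  (T2 : lmodType K) (t2 : A -> A -> T2) (hT2 : is_tensor2 t2)
  (T3 : lmodType K) (t3 : A -> A -> A -> T3) (hT3 : is_tensor3 t3)
  (d1 : T2 -> A) (d1_lin : klinear d1)
  (d1_def : forall a0 a1, d1 (t2 a0 a1) = a0 * a1 - a1 * a0)
  (d2 : T3 -> T2) (d2_lin : klinear d2)
  (d2_def : forall a0 a1 a2,
      d2 (t3 a0 a1 a2) = t2 (a0 * a1) a2 - t2 a0 (a1 * a2) - t2 a1 (a2 * a0)) :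
  quot_iso d1 d2 (fun z : L => psi z = 0).
Proof.
have [leibL relL _] := hL.
have lt1 : (1 < m + n)%N by apply: leq_trans hmn.
have oe : Ordinal (ltnW lt1) != Ordinal lt1 by rewrite -val_eqE.
have [_ univ2] := hT2.
have [g [lin_g g_t2 _]] := univ2 L _ (hv_sub_bilinear leibL relL oe).
exists g; split.
- by move=> k x y _ _; apply: lin_g.
- exact: (g_ker_d1 psi_lin psi_br psi_v oe lin_g g_t2 hT2 d1_lin d1_def).
- exact: (ker_psi_g_ker_d1 leibL relL psi_lin psi_br psi_v hmn oe lin_g g_t2 hT2
    d1_lin d1_def hL).
- move=> x _; split; first exact: (g_eq0_in_range_d2 oe lin_g g_t2 hT2 d2_lin d2_def hL).
  by case=> y ->; apply: (g_d2_eq0 leibL relL hmn oe lin_g g_t2 hT3 d2_lin d2_def).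
Qed.
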